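(* Let $f:\mathbb{R}^n\to\mathbb{R}$ be differentiable, $\mu$-strongly convex, with $L$-Lipschitz gradient $\nabla f$, and let $x^*$ be its unique minimizer. Suppose the estimators $G^t$ are independent versions of an unbiased estimator $G$ of $\nabla f$, and that $G$ is $L$-Lipschitz continuous almost surely. Let $\mathcal{E}^t$ denote the event that $\|G^t(x^t)\|_\infty\le\eta$. Then the iterates of SMGD satisfy $$\mathbb{E}\left[\|x^{t+1}-x^*\|_2^2\,\middle|\,x^t,\mathcal{E}^t\right]\le\Big(1-\frac{2\alpha\mu}{\eta}\Big)\|x^t-x^*\|_2^2+\frac{L\alpha^2\sqrt{n}}{\eta}\|x^t-x^*\|_2+\frac{\alpha^2}{\eta}\,\mathbb{E}\left[\|G^t(x^* )\|_1\,\middle|\,x^t,\mathcal{E}^t\right].$$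
   Context: A differentiable $f$ is $\mu$-strongly convex if $\langle\nabla f(x)-\nabla f(y),x-y\rangle\ge\mu\|x-y\|_2^2$ for all $x,y$. SMGD: Let $\alpha>0$, $\eta>0$, $x^0\in\alpha\mathbb{Z}^n$. At step $t$ a random vector $G^t(x^t)\in\mathbb{R}^n$ is drawn; then for each coordinate $i$, conditionally on $G^t$ and $x^t$, $\Delta^t_i\in\{0,1\}$ is Bernoulli with $\mathbb{P}[\Delta^t_i=1\mid G^t,x^t]=\min(|G^t(x^t)_i|/\eta,1)$, and $x^{t+1}_i=x^t_i-\alpha\,\mathrm{sgn}(G^t(x^t)_i)\Delta^t_i$. A random function $G$ is an unbiased estimator of $\nabla f$ if $\mathbb{E}[G(x)]=\nabla f(x)$ for all $x$. Standing assumptions: $\{G^t\}$ are i.i.d. copies of $G$, each $G^t$ is independent of $x^t$, and $\mathbb{E}[G^t(x^t)\mid x^t,\mathcal{E}^t]=\nabla f(x^t)$. *)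

From HB Require Import structures.
From mathcomp Require Import all_boot all_order all_algebra.
From mathcomp Require Import all_classical all_reals all_analysis.
Set Implicit Arguments. Unset Strict Implicit. Unset Printing Implicit Defensive.
Import Order.TTheory GRing.Theory Num.Theory.
Import numFieldNormedType.Exports.
Local Open Scope classical_set_scope.
Local Open Scope ring_scope.

Section Norms.
Variables (R : realType) (n : nat).
Definition dotp (u v : 'rV[R]_n) : R := \sum_(i < n) u 0 i * v 0 i.
Definition norm2sq (v : 'rV[R]_n) : R := \sum_(i < n) (v 0 i) ^+ 2.
Definition norm2 (v : 'rV[R]_n) : R := Num.sqrt (norm2sq v).
Definition norm1 (v : 'rV[R]_n) : R := \sum_(i < n) `|v 0 i|.
Definition norminf (v : 'rV[R]_n) : R := \big[Num.max/0]_(i < n) `|v 0 i|.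
Definition grad (f : 'rV[R]_n -> R) (x : 'rV[R]_n) : 'rV[R]_n :=
  \row_(i < n) ('d f x (delta_mx 0 i : 'rV[R]_n)).
End Norms.

Definition strongly_convex (R : realType) n (f : 'rV[R]_n -> R) (mu : R) :=
  forall x y, mu * norm2sq (x - y) <= dotp (grad f x - grad f y) (x - y).

Definition condE d (T : measurableType d) (R : realType)
  (P : probability T R) (E : set T) (X : T -> \bar R) : \bar R :=
  ((\int[P]_(w in E) X w) * ((fine (P E))^-1)%:E)%E.

Definition sigmaG d (T : measurableType d) (R : realType) n
  (G : T -> 'rV[R]_n -> 'rV[R]_n) : set (set T) :=
  <<s [set A | exists (y : 'rV[R]_n) (j : 'I_n) (B : set R),
         measurable B /\ A = (fun w => G w y 0 j) @^-1` B] >>.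

(* One SMGD step from state x, with estimator draw G w and Bernoulli mask D w. *)
Definition smgd_step (R : realType) n (alpha : R) (x : 'rV[R]_n)
  (g : 'rV[R]_n) (D : 'I_n -> R) : 'rV[R]_n :=
  \row_(i < n) (x 0 i - alpha * Num.sg (g 0 i) * D i).

From HB Require Import structures.
From mathcomp Require Import all_boot all_order all_algebra.
From mathcomp Require Import all_classical all_reals all_analysis.
From mathcomp Require Import ring lra measurable_realfun.
Import Order.TTheory GRing.Theory Num.Theory.
Import numFieldNormedType.Exports.
Local Open Scope classical_set_scope.
Local Open Scope ring_scope.
Set Implicit Arguments. Unset Strict Implicit. Unset Printing Implicit Defensive.

(* Write a := x - xs, g := G(x) and s_i := sg(g_i).  Because every mask D_i is
   0 or 1 and s_i^2 <= 1, the squared distance after one step is at most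
   |a|^2 + sum_i (alpha^2 D_i - 2 alpha a_i s_i D_i).  Conditionally on sigma(g) the
   mask D_i has mean min(|g_i|/eta, 1), which equals |g_i|/eta on the event
   E = {|g|_oo <= eta}; splitting E according to the sign of g_i therefore gives
   E[D_i | E] = E[|g_i| | E]/eta and E[s_i D_i | E] = E[g_i | E]/eta = grad_i f(x)/eta.
   Strong convexity at the minimiser (where the gradient vanishes) bounds
   <grad f(x), a> below by mu |a|^2, and the almost sure Lipschitz bound combined with
   |v|_1 <= sqrt n |v|_2 gives |G(x)|_1 <= |G(xs)|_1 + sqrt n L |a|. *)

Lemma sqr_sum_le_mul_sum_sqr (R : realDomainType) n (b : 'I_n -> R) :
  (\sum_i b i) ^+ 2 <= n%:R * \sum_i b i ^+ 2.
Proof.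
rewrite -(ler_pMn2r (isT : 0 < 2)%N).
have <- : \sum_i \sum_j (b i ^+ 2 + b j ^+ 2) = n%:R * (\sum_i b i ^+ 2) *+ 2.
  under eq_bigr do rewrite big_split /= sumr_const card_ord.
  by rewrite big_split /= sumr_const card_ord sumrMnl mulr_natl mulr2n.
rewrite expr2 mulr_suml -(sumrMnl _ _ _ 2) ler_sum // => i _.
rewrite mulr_sumr -(sumrMnl _ _ _ 2) ler_sum // => j _.
exact: leif_mean_square_scaled.
Qed.

Section Norms.
Variables (R : realType) (n : nat).
Implicit Types (u v : 'rV[R]_n).

Lemma norm1D_le u v : norm1 (u + v) <= norm1 u + norm1 v.
Proof. by rewrite -big_split ler_sum // => i _; rewrite mxE ler_normD. Qed.

Lemma norm1_le_sqrt_norm2 v : norm1 v <= Num.sqrt n%:R * norm2 v.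
Proof.
have norm1_ge0 : 0 <= norm1 v by apply: sumr_ge0.
rewrite /norm2 -sqrtrM ?ler0n // -(ger0_norm norm1_ge0) -sqrtr_sqr ler_wsqrtr //.
rewrite /norm2sq (eq_bigr (fun i => `|v 0 i| ^+ 2)) => [|i _]; last by rewrite real_normK ?num_real.
exact: sqr_sum_le_mul_sum_sqr.
Qed.

Lemma norm1_le_lipschitz (g : 'rV[R]_n -> 'rV[R]_n) (L : R) y z :
  norm2 (g y - g z) <= L * norm2 (y - z) ->
  norm1 (g y) <= norm1 (g z) + Num.sqrt n%:R * (L * norm2 (y - z)).
Proof.
move=> gLip; rewrite -{1}(subrKC (g z) (g y)).
apply: le_trans (norm1D_le _ _) _; rewrite lerD2l.
by apply: le_trans (norm1_le_sqrt_norm2 _) _; rewrite ler_wpM2l ?sqrtr_ge0.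
Qed.

End Norms.

Lemma diff_eq0_at_min (R : realType) (V : normedModType R) (f : V -> R) (a : V) :
  (forall y, differentiable f y) -> (forall y, f a <= f y) -> forall v, 'd f a v = 0.
Proof.
move=> fdiff amin v.
pose phi t := f (a + t *: v).
have phi_quotient t : (fun h : R => h^-1 *: ((phi \o shift t) (h *: 1) - phi t)) =
    (fun h => h^-1 *: ((f \o shift (a + t *: v)) (h *: v) - f (a + t *: v))).
  apply: funext => h /=; rewrite /phi /shift /= [h *: 1]mulr1.
  by congr (_ *: (f _ - _)); rewrite scalerDl addrCA.
have phi_derivable t : derivable phi t 1.
  by rewrite /derivable phi_quotient; exact: diff_derivable.
have phi'0 : is_derive (0 : R) 1 phi 0.
  apply: (@derive1_at_min R phi (-1) 1) => [|t _|| t _].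
  - lra.
  - exact: phi_derivable.
  - by rewrite in_itv /= ltrN10 ltr01.
  - by rewrite /phi scale0r addr0; exact: amin.
rewrite -deriveE // -[a](addr0 a) -(scale0r v) /derive -phi_quotient.
exact: derive_val.
Qed.

Section Gradient.
Variables (R : realType) (n : nat) (f : 'rV[R]_n -> R).

Lemma grad_eq0_at_min a : (forall y, differentiable f y) -> (forall y, f a <= f y) ->
  grad f a = 0.
Proof. by move=> fdiff amin; apply/rowP => i; rewrite !mxE diff_eq0_at_min. Qed.

Lemma strongly_convex_at_min mu a x : strongly_convex f mu -> grad f a = 0 ->
  mu * norm2sq (x - a) <= dotp (grad f x) (x - a).
Proof. by move=> /(_ x a) + ga; rewrite ga subr0. Qed.

End Gradient.

Lemma sqr_sub_mask_le (R : realDomainType) (a alpha s d : R) :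
  `|s| <= 1 -> d = 0 \/ d = 1 ->
  (a - alpha * s * d) ^+ 2 <= a ^+ 2 + (alpha ^+ 2 * d - 2 * alpha * a * (s * d)).
Proof.
rewrite ler_norml => /andP[s_geN1 s_le1] [->|->]; first by rewrite !mulr0 !subr0 addr0.
have s2_le1 : s ^+ 2 <= 1 by nra.
have := ler_wpM2l (sqr_ge0 alpha) s2_le1.
by rewrite !mulr1; nra.
Qed.

Lemma norm2sq_smgd_step_le (R : realType) n (alpha : R) (x xs g : 'rV[R]_n)
    (D : 'I_n -> R) : (forall i, D i = 0 \/ D i = 1) ->
  norm2sq (smgd_step alpha x g D - xs) <= norm2sq (x - xs)
    + \sum_i (alpha ^+ 2 * D i - 2 * alpha * (x - xs) 0 i * (Num.sg (g 0 i) * D i)).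
Proof.
move=> D01; rewrite /norm2sq -big_split ler_sum // => i _; rewrite !mxE addrAC.
by apply: sqr_sub_mask_le => //; rewrite normr_sg lern1 leq_b1.
Qed.

Lemma sgr_mem (T : Type) (R : realDomainType) (h : T -> R) (w : T) :
  Num.sg (h w) = (w \in [set w | 0 < h w])%:R - (w \in [set w | h w < 0])%:R.
Proof.
have [hw_lt0|hw_gt0|hw0] := ltgtP (h w) 0.
- rewrite ltr0_sg // memNset; last by apply/negP; rewrite -leNgt ltW.
  by rewrite (@mem_set _ [set w | h w < 0]) // sub0r.
- rewrite gtr0_sg // (@mem_set _ [set w | 0 < h w]) // memNset ?subr0 //.
  by apply/negP; rewrite -leNgt ltW.
- by rewrite hw0 sgr0 !memNset /= ?hw0 ?ltxx ?subrr.
Qed.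

Section MeasurableFunctions.
Context d (T : measurableType d) (R : realType).
Implicit Types h : T -> R.

Lemma measurable_set_le h c : measurable_fun setT h -> measurable [set w | h w <= c].
Proof. by move=> mh; rewrite -preimage_itvNyc -(setTI (_ @^-1` _)); exact: mh. Qed.

Lemma measurable_set_gt h c : measurable_fun setT h -> measurable [set w | c < h w].
Proof. by move=> mh; rewrite -preimage_itvoy -(setTI (_ @^-1` _)); exact: mh. Qed.

Lemma measurable_set_lt h c : measurable_fun setT h -> measurable [set w | h w < c].
Proof. by move=> mh; rewrite -preimage_itvNyo -(setTI (_ @^-1` _)); exact: mh. Qed.

Lemma measurable_sgr h : measurable_fun setT h -> measurable_fun setT (fun w => Num.sg (h w)).
Proof.
move=> mh; rewrite (_ : (fun w => _) = \1_[set w | 0 < h w] \- \1_[set w | h w < 0]).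
  by apply: measurable_funB; apply: measurable_indic;
    [exact: measurable_set_gt | exact: measurable_set_lt].
by apply/funext => w /=; rewrite !indicE sgr_mem.
Qed.

Variables (n : nat) (V : T -> 'rV[R]_n).
Hypothesis mV : forall i, measurable_fun setT (fun w => V w 0 i).

Lemma measurable_norm2sq : measurable_fun setT (fun w => norm2sq (V w)).
Proof. by apply: measurable_sum => i; apply: measurable_funX. Qed.

Lemma measurable_norminf : measurable_fun setT (fun w => norminf (V w)).
Proof.
suff max_seq s : measurable_fun setT (fun w => \big[Num.max/0]_(j <- s) `|V w 0 j|).
  exact: max_seq.
elim: s => [|j s ihs].
  by under eq_fun do rewrite big_nil; exact: measurable_cst.
under eq_fun do rewrite big_cons.
by apply: measurable_maxr => //; exact: measurableT_comp.
Qed.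

End MeasurableFunctions.

Section ConditionalMean.
Context d (T : measurableType d) (R : realType) (P : probability T R) (E : set T).
Hypotheses (mE : measurable E) (PE_gt0 : (0 < P E)%E).

Definition cmean (h : T -> R) : R := (\int[P]_(w in E) h w) / fine (P E).

Local Notation integrableE h := (P.-integrable E (EFin \o h)).

Lemma fine_PE_gt0 : 0 < fine (P E).
Proof. by rewrite fine_gt0 // PE_gt0 (le_lt_trans (probability_le1 P mE)) ?ltry. Qed.

Lemma integrable_bounded (h : T -> R) (M : R) :
  measurable_fun setT h -> (forall w, E w -> `|h w| <= M) -> integrableE h.
Proof.
move=> mh hM; apply: measurable_bounded_integrable => //.
- exact: le_lt_trans (probability_le1 P mE) (ltry _).
- exact: measurable_funS mh.
exists M; split; first exact: num_real.
by move=> N /ltW MN w Ew; exact: le_trans (hM w Ew) MN.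
Qed.

Lemma integrable_cst_EFin (c : R) : integrableE (fun=> c).
Proof. exact: (integrable_bounded (M := `|c|) (measurable_cst c)). Qed.

Lemma integrableD_EFin (h1 h2 : T -> R) :
  integrableE h1 -> integrableE h2 -> integrableE (fun w => h1 w + h2 w).
Proof. by move=> i1 i2; apply: eq_integrable mE _ _ _ (integrableD mE i1 i2) => w _. Qed.

Lemma integrableB_EFin (h1 h2 : T -> R) :
  integrableE h1 -> integrableE h2 -> integrableE (fun w => h1 w - h2 w).
Proof. by move=> i1 i2; apply: eq_integrable mE _ _ _ (integrableB mE i1 i2) => w _. Qed.

Lemma integrableZl_EFin (c : R) (h : T -> R) :
  integrableE h -> integrableE (fun w => c * h w).
Proof. by move=> ih; apply: eq_integrable mE _ _ _ (integrableZl mE c ih) => w _. Qed.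

Lemma integrable_sum_EFin (I : Type) (s : seq I) (h : I -> T -> R) :
  (forall i, integrableE (h i)) -> integrableE (fun w => \sum_(i <- s) h i w).
Proof.
move=> ih; apply: eq_integrable mE _ _ _ (integrable_sum mE s (fun i _ => ih i)) => w _.
by rewrite /= sumEFin.
Qed.

Lemma condE_EFin (h : T -> R) :
  integrableE h -> condE P E (fun w => (h w)%:E) = (cmean h)%:E.
Proof.
by move=> ih; rewrite /condE /cmean /Rintegral EFinM fineK //; exact: integrable_fin_num.
Qed.

Lemma cmean_cst (c : R) : cmean (fun=> c) = c.
Proof. by rewrite /cmean Rintegral_cst // mulfK // gt_eqF // fine_PE_gt0. Qed.

Lemma cmeanD (h1 h2 : T -> R) : integrableE h1 -> integrableE h2 ->
  cmean (fun w => h1 w + h2 w) = cmean h1 + cmean h2.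
Proof. by move=> i1 i2; rewrite /cmean RintegralD // mulrDl. Qed.

Lemma cmeanB (h1 h2 : T -> R) : integrableE h1 -> integrableE h2 ->
  cmean (fun w => h1 w - h2 w) = cmean h1 - cmean h2.
Proof. by move=> i1 i2; rewrite /cmean RintegralB // mulrBl. Qed.

Lemma cmeanZl (c : R) (h : T -> R) : integrableE h ->
  cmean (fun w => c * h w) = c * cmean h.
Proof. by move=> ih; rewrite /cmean RintegralZl // mulrA. Qed.

Lemma cmean_sum (I : Type) (s : seq I) (h : I -> T -> R) :
  (forall i, integrableE (h i)) ->
  cmean (fun w => \sum_(i <- s) h i w) = \sum_(i <- s) cmean (h i).
Proof.
move=> ih; elim: s => [|i s IHs].
  by under eq_fun do rewrite big_nil; rewrite cmean_cst big_nil.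
under eq_fun do rewrite big_cons.
by rewrite cmeanD ?IHs ?big_cons //; exact: integrable_sum_EFin.
Qed.

Lemma ae_le_cmean (h1 h2 : T -> R) : integrableE h1 -> integrableE h2 ->
  {ae P, forall w, E w -> h1 w <= h2 w} -> cmean h1 <= cmean h2.
Proof.
move=> i1 i2 [N [mN PN0 h12]].
apply: ler_wpM2r; first by rewrite invr_ge0 ltW // fine_PE_gt0.
rewrite /Rintegral.
rewrite (negligible_integral mN mE i1) // (negligible_integral mN mE i2) //.
have mEN : measurable (E `\` N) by exact: measurableD.
have sEN : E `\` N `<=` E by exact: subDsetl.
have i1N := integrableS mE mEN sEN i1; have i2N := integrableS mE mEN sEN i2.
rewrite fine_le ?(integrable_fin_num mEN) //; apply: le_integral => //.
move=> w /set_mem [Ew Nw]; rewrite lee_fin.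
by apply: contrapT => h12w; apply: Nw; apply: h12 => /(_ Ew).
Qed.

Lemma integrable_norm1 n (V : T -> 'rV[R]_n) :
  (forall i, integrableE (fun w => V w 0 i)) -> integrableE (fun w => norm1 (V w)).
Proof. by move=> iV; apply: integrable_sum_EFin => i; exact: integrable_norm. Qed.

Lemma cmean_norm1_le_lipschitz n (G : T -> 'rV[R]_n -> 'rV[R]_n) (L : R) y z :
  (forall i, integrableE (fun w => G w y 0 i)) ->
  (forall i, integrableE (fun w => G w z 0 i)) ->
  {ae P, forall w, forall y z, norm2 (G w y - G w z) <= L * norm2 (y - z)} ->
  cmean (fun w => norm1 (G w y))
  <= cmean (fun w => norm1 (G w z)) + Num.sqrt n%:R * (L * norm2 (y - z)).
Proof.
move=> iy iz Glip; rewrite -[X in _ + X]cmean_cst -cmeanD //; last first.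
- exact: integrable_cst_EFin.
- exact: integrable_norm1.
apply: ae_le_cmean; first exact: integrable_norm1.
  by apply: integrableD_EFin; [exact: integrable_norm1 | exact: integrable_cst_EFin].
by apply: filterS Glip => w /(_ y z) /norm1_le_lipschitz.
Qed.

End ConditionalMean.

Lemma Rintegral_sgrM d (T : measurableType d) (R : realType)
    (mu : {measure set T -> \bar R}) (E : set T) (g h : T -> R) :
  measurable E -> measurable_fun setT g -> mu.-integrable E (EFin \o h) ->
  \int[mu]_(w in E) (Num.sg (g w) * h w) =
  \int[mu]_(w in E `&` [set w | 0 < g w]) h w - \int[mu]_(w in E `&` [set w | g w < 0]) h w.
Proof.
move=> mE mg ih.
have integrable_restr (B : set T) : measurable B -> mu.-integrable E (EFin \o h \_ B).
  move=> mB; rewrite -restrict_EFin; apply/(integrable_restrict _ mB mE).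
  exact: integrableS mE (measurableI _ _ mE mB) (@subIsetl _ E B) ih.
rewrite !Rintegral_mkcondr -RintegralB //; last 2 first.
- exact/integrable_restr/measurable_set_gt.
- exact/integrable_restr/measurable_set_lt.
apply: eq_Rintegral => w _; rewrite !patchE sgr_mem mulrBl.
by case: (w \in _); case: (w \in _); rewrite /= ?mul1r ?mul0r.
Qed.

Definition coord_preimages {d} {T : measurableType d} {R : realType} {n}
    (g : T -> 'rV[R]_n) : set (set T) :=
  [set A | exists (j : 'I_n) (B : set R), measurable B /\ A = (fun w => g w 0 j) @^-1` B].

Lemma measurable_coord_preimages d (T : measurableType d) (R : realType) n
    (g : T -> 'rV[R]_n) (j : 'I_n) :
  measurable_fun (setT : set (g_sigma_algebraType (coord_preimages g))) (fun w => g w 0 j).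
Proof. by move=> _ B mB; rewrite setTI; apply: sub_sigma_algebra; exists j, B. Qed.

Section SMGDStep.
Context d (T : measurableType d) (R : realType) (P : probability T R) (n : nat).
Variables (alpha eta : R) (x xs : 'rV[R]_n) (g : T -> 'rV[R]_n) (D : T -> 'I_n -> R).
Let E := [set w | norminf (g w) <= eta].
Hypotheses (eta_gt0 : 0 < eta) (PE_gt0 : (0 < P E)%E).
Hypotheses (mg : forall i, measurable_fun setT (fun w => g w 0 i))
  (mD : forall i, measurable_fun setT (fun w => D w i))
  (D01 : forall w i, D w i = 0 \/ D w i = 1)
  (Dlaw : forall i A, <<s coord_preimages g >> A ->
     (\int[P]_(w in A) (D w i)%:E
      = \int[P]_(w in A) (Num.min (`|g w 0 i| / eta) 1)%:E)%E).

Let mE : measurable E.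
Proof. exact/measurable_set_le/measurable_norminf. Qed.

Let coord_le_eta w i : E w -> `|g w 0 i| <= eta.
Proof. exact: le_trans (le_bigmax _ _ i). Qed.

Let integrable_coord i : P.-integrable E (EFin \o fun w => g w 0 i).
Proof. by apply: (integrable_bounded P mE (mg i)) => w /coord_le_eta. Qed.

Let integrable_norm_coord i : P.-integrable E (EFin \o fun w => `|g w 0 i|).
Proof.
apply: (integrable_bounded P mE (M := eta)); first exact: measurableT_comp.
by move=> w /coord_le_eta; rewrite normr_id.
Qed.

Let integrable_mask i : P.-integrable E (EFin \o fun w => D w i).
Proof.
by apply: (integrable_bounded P mE (M := 1) (mD i)) => w _; case: (D01 w i) => ->;
  rewrite ?normr0 ?normr1.
Qed.

Let integrable_sgr_mask i : P.-integrable E (EFin \o fun w => Num.sg (g w 0 i) * D w i).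
Proof.
apply: (integrable_bounded P mE (M := 1)).
  exact: measurable_funM (measurable_sgr (mg i)) (mD i).
by move=> w _; rewrite normrM normr_sg; case: (D01 w i) => ->; case: (_ != 0);
  rewrite ?normr0 ?normr1 ?mulr0 ?mulr1.
Qed.

Let sigma_coord_sets i : [/\ <<s coord_preimages g >> E,
  <<s coord_preimages g >> (E `&` [set w | 0 < g w 0 i]) &
  <<s coord_preimages g >> (E `&` [set w | g w 0 i < 0])].
Proof.
(* Run the generic measurability lemmas on [T] with the sigma-algebra generated by [g]. *)
pose Tg := g_sigma_algebraType (coord_preimages g).
have mgi := @measurable_coord_preimages _ T R n g.
have mE_g : measurable (E : set Tg) by exact/measurable_set_le/measurable_norminf.
split => //; apply: (@measurableI _ Tg) => //.
- exact: (@measurable_set_gt _ Tg).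
- exact: (@measurable_set_lt _ Tg).
Qed.

Let Rintegral_mask i A : <<s coord_preimages g >> A -> A `<=` E ->
  \int[P]_(w in A) D w i = \int[P]_(w in A) (eta^-1 * `|g w 0 i|).
Proof.
(* On [E] the truncation [min _ 1] in the law of the mask is inactive. *)
move=> SA AE; congr fine; rewrite Dlaw //; apply: eq_integral => w /set_mem /AE Ew.
by rewrite min_l ?ler_pdivrMr ?mul1r ?coord_le_eta // mulrC.
Qed.

Lemma cmean_mask i : cmean P E (fun w => D w i) = cmean P E (fun w => `|g w 0 i|) / eta.
Proof.
have [SE _ _] := sigma_coord_sets i.
by rewrite /cmean Rintegral_mask // RintegralZl // -mulrA mulrC.
Qed.

Lemma cmean_sgr_mask i :
  cmean P E (fun w => Num.sg (g w 0 i) * D w i) = cmean P E (fun w => g w 0 i) / eta.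
Proof.
have [_ SEpos SEneg] := sigma_coord_sets i.
rewrite /cmean (Rintegral_sgrM _ (mg i) (integrable_mask i)) //.
rewrite !Rintegral_mask //; try exact: subIsetl.
rewrite -(Rintegral_sgrM _ (mg i)) //; last first.
  by apply: integrableZl_EFin => //; exact: integrable_norm_coord.
under eq_Rintegral do rewrite mulrCA -numEsg.
by rewrite RintegralZl // -mulrA mulrC.
Qed.

Let mask_term i w :=
  alpha ^+ 2 * D w i - 2 * alpha * (x - xs) 0 i * (Num.sg (g w 0 i) * D w i).

Let integrable_mask_term i : P.-integrable E (EFin \o mask_term i).
Proof. by apply: integrableB_EFin => //; exact: integrableZl_EFin. Qed.

Let integrable_mask_terms :
  P.-integrable E (EFin \o fun w => norm2sq (x - xs) + \sum_i mask_term i w).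
Proof.
apply: integrableD_EFin => //; first exact: integrable_cst_EFin.
exact: integrable_sum_EFin.
Qed.

Let norm2sq_step_le w :
  norm2sq (smgd_step alpha x (g w) (D w) - xs) <= norm2sq (x - xs) + \sum_i mask_term i w.
Proof. exact: norm2sq_smgd_step_le. Qed.

Let integrable_norm2sq_step :
  P.-integrable E (EFin \o fun w => norm2sq (smgd_step alpha x (g w) (D w) - xs)).
Proof.
apply: le_integrable integrable_mask_terms => //.
  apply/measurable_EFinP/measurable_funS/measurable_norm2sq => // i.
  under eq_fun do rewrite !mxE.
  apply: measurable_funB => //; apply: measurable_funB => //.
  by apply: measurable_funM => //; apply: measurable_funM => //; exact: measurable_sgr.
have step_ge0 w : 0 <= norm2sq (smgd_step alpha x (g w) (D w) - xs).
  by apply: sumr_ge0 => i _; exact: sqr_ge0.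
move=> w _ /=; rewrite ger0_norm ?step_ge0 // ger0_norm ?lee_fin ?norm2sq_step_le //.
exact: le_trans (step_ge0 w) (norm2sq_step_le w).
Qed.

Let cmean_mask_term i : cmean P E (mask_term i) =
  alpha ^+ 2 / eta * cmean P E (fun w => `|g w 0 i|)
  - 2 * alpha / eta * ((x - xs) 0 i * cmean P E (fun w => g w 0 i)).
Proof.
rewrite (cmeanB mE) ?(cmeanZl mE) ?cmean_mask ?cmean_sgr_mask //;
  try exact: integrableZl_EFin.
by field; rewrite gt_eqF.
Qed.

Lemma condE_norm2sq_smgd_step_le :
  (condE P E (fun w => (norm2sq (smgd_step alpha x (g w) (D w) - xs))%:E)
  <= (norm2sq (x - xs)
      - 2 * alpha / eta * \sum_i (x - xs) 0 i * cmean P E (fun w => g w 0 i)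
      + alpha ^+ 2 / eta * cmean P E (fun w => norm1 (g w)))%:E)%E.
Proof.
rewrite (condE_EFin mE integrable_norm2sq_step) lee_fin.
apply: le_trans (ae_le_cmean mE PE_gt0 integrable_norm2sq_step integrable_mask_terms _) _.
  by apply: aeW => w _; exact: norm2sq_step_le.
rewrite (cmeanD mE) ?cmean_cst ?(cmean_sum mE PE_gt0) //; last 2 first.
- exact: integrable_cst_EFin.
- exact: integrable_sum_EFin.
rewrite (eq_bigr _ (fun i _ => cmean_mask_term i)) sumrB -!mulr_sumr.
lra.
Qed.

End SMGDStep.

Theorem theorem5p1
  (R : realType) (n : nat) (f : 'rV[R]_n -> R) (mu L alpha eta : R)
  (xs : 'rV[R]_n)
  (hdiff : forall y, differentiable f y)
  (hmu : 0 < mu) (hsc : strongly_convex f mu)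
  (hLip : forall y z, norm2 (grad f y - grad f z) <= L * norm2 (y - z))
  (hmin : forall y, f xs <= f y)
  (halpha : 0 < alpha) (heta : 0 < eta)
  (d : measure_display) (T : measurableType d) (P : probability T R)
  (G : T -> 'rV[R]_n -> 'rV[R]_n) (D : T -> 'I_n -> R)
  (hGmeas : forall y i, measurable_fun setT (fun w => G w y 0 i))
  (hunbiased : forall y i, P.-integrable setT (fun w => (G w y 0 i)%:E) /\
      (\int[P]_w (G w y 0 i)%:E = (grad f y 0 i)%:E)%E)
  (hGlip : {ae P, forall w, forall y z,
      norm2 (G w y - G w z) <= L * norm2 (y - z)})
  (x : 'rV[R]_n) (hx : forall i, exists k : int, x 0 i = k%:~R * alpha)
  (E : set T) (hEdef : E = [set w | norminf (G w x) <= eta])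
  (hEpos : (0 < P E)%E)
  (hcond : forall i, P.-integrable E (fun w => (G w x 0 i)%:E) /\
      condE P E (fun w => (G w x 0 i)%:E) = (grad f x 0 i)%:E)
  (hD01 : forall w i, D w i = 0 \/ D w i = 1)
  (hDmeas : forall i, measurable_fun setT (fun w => D w i))
  (hDlaw : forall i A, sigmaG G A ->
      (\int[P]_(w in A) (D w i)%:E
       = \int[P]_(w in A) (Num.min (`|G w x 0 i| / eta) 1)%:E)%E) :
  (condE P E (fun w => (norm2sq (smgd_step alpha x (G w x) (D w) - xs))%:E)
   <= ((1 - 2 * alpha * mu / eta) * norm2sq (x - xs)
        + L * alpha ^+ 2 * Num.sqrt (n%:R) / eta * norm2 (x - xs))%:E
      + (alpha ^+ 2 / eta)%:E * condE P E (fun w => (norm1 (G w xs))%:E))%E.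
Proof.
subst E; set E := [set w | norminf (G w x) <= eta] in hEpos hcond *.
have mE : measurable E by exact/measurable_set_le/measurable_norminf.
have integrable_coord y i : P.-integrable E (EFin \o fun w => G w y 0 i).
  exact: integrableS measurableT mE (subsetT E) (hunbiased y i).1.
have cmean_coord i : cmean P E (fun w => G w x 0 i) = grad f x 0 i.
  by apply: EFin_inj; rewrite -(condE_EFin mE) ?(hcond i).2.
have Dlaw i A : <<s coord_preimages (fun w => G w x) >> A ->
    (\int[P]_(w in A) (D w i)%:E
     = \int[P]_(w in A) (Num.min (`|G w x 0 i| / eta) 1)%:E)%E.
  move=> cA; apply: hDlaw; apply: (sub_sigma_algebra2 _ cA) => _ [j [B [mB ->]]].
  by exists x, j, B.
have step := condE_norm2sq_smgd_step_le alpha x xs heta hEpos (hGmeas x) hDmeas hD01 Dlaw.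
have lip := cmean_norm1_le_lipschitz mE hEpos (integrable_coord x) (integrable_coord xs) hGlip.
have sc := strongly_convex_at_min x hsc (grad_eq0_at_min hdiff hmin).
apply: le_trans step _; rewrite (condE_EFin mE) -?EFinM -?EFinD ?lee_fin; last first.
  exact: integrable_norm1.
under eq_bigr do rewrite cmean_coord mulrC.
have rate_ge0 : 0 <= 2 * alpha / eta by rewrite divr_ge0 ?mulr_ge0 ?ltW.
have noise_ge0 : 0 <= alpha ^+ 2 / eta by rewrite divr_ge0 ?sqr_ge0 ?ltW.
have := ler_wpM2l rate_ge0 sc; have := ler_wpM2l noise_ge0 lip.
rewrite -/E /dotp; lra.
Qed.
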